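(* Fix integers $q\ge2$, $L\ge1$, a real $r\in[0,\frac{L}{L+1})$ and a real $\varepsilon>0$. Then there is a function $\delta:\mathbb{N}\to\mathbb{R}$ with $\delta(n)\to0$ as $n\to\infty$ such that, for every $n$ with $rn\in\mathbb{N}$, if there exists an $(r,L)$ list-decodable code $C\subseteq[q]^n$ of rate at least $1-r-\varepsilon$ (i.e. $|C|\ge q^{(1-r-\varepsilon)n}$), then $L\ge \frac{r}{\varepsilon}+\delta(n)$.
   Context: $[q]=\{1,\dots,q\}$. A code is a subset $C\subseteq[q]^n$, of rate $\log_q(|C|)/n$. $B_t(v)$ is the Hamming ball of radius $t$ around $v\in[q]^n$. $C$ is $(r,L)$ list-decodable if $|B_{rn}(v)\cap C|\le L$ for all $v\in[q]^n$. *)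

From HB Require Import structures.
From mathcomp Require Import all_boot all_order all_algebra.
From mathcomp Require Import all_classical all_reals all_analysis.
Set Implicit Arguments. Unset Strict Implicit. Unset Printing Implicit Defensive.
Import Order.TTheory GRing.Theory Num.Theory.
Local Open Scope ring_scope.

(* Words of length n over the alphabet [q] = {1..q}, represented by 'I_q. *)
Definition word (q n : nat) := {ffun 'I_n -> 'I_q}.

Definition hamming (q n : nat) (u v : word q n) : nat :=
  #|[set i : 'I_n | u i != v i]|.

Definition hball (R : realType) (q n : nat) (t : R) (v : word q n) : {set word q n} :=
  [set u : word q n | (hamming v u)%:R <= t].

Definition list_decodable (R : realType) (q n : nat) (r : R) (L : nat)
  (C : {set word q n}) : Prop :=
  forall v : word q n, (#|hball (r * n%:R) v :&: C| <= L)%N.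

(* Let k = r n and m = k %/ L, so that t = (L+1) m <= n because r < L/(L+1).
   If |C| > L q^(n-t), pigeonhole on the last n - t coordinates yields L+1
   codewords c_0, ..., c_L that agree there.  Cut the first t coordinates into
   L+1 blocks of length m and let v copy c_j on block j: then v differs from
   each c_j on at most L m <= k coordinates, so the ball of radius r n around v
   holds L+1 codewords.  Hence q^((1-r-eps) n) <= |C| <= L q^(n-t); taking
   logarithms gives r n <= L eps n + L (log_q L + L + 1), which is
   L >= r/eps - O(1/n). *)

From HB Require Import structures.
From mathcomp Require Import all_boot all_order all_algebra.
From mathcomp Require Import all_classical all_reals all_analysis.
From mathcomp Require Import zify ring lra.
Import Order.TTheory GRing.Theory Num.Theory.
Import numFieldNormedType.Exports.

Set Implicit Arguments.
Unset Strict Implicit.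
Unset Printing Implicit Defensive.

Local Open Scope nat_scope.

Lemma sum_nat_div_blocks (F : nat -> nat) (a m : nat) :
  \sum_(0 <= i < a * m) F (i %/ m) = \sum_(0 <= b < a) F b * m.
Proof.
have [->|m_gt0] := posnP m.
  by rewrite muln0 big_geq // big1 // => b _; rewrite muln0.
elim: a => [|a IHa]; first by rewrite mul0n !big_geq.
rewrite mulSnr (big_cat_nat _ (n := a * m)) ?leq_addr //= IHa big_nat_recr //=.
congr (_ + _); rewrite (eq_big_nat _ _ (F2 := fun=> F a)).
  by rewrite sum_nat_const_nat addKn mulnC.
move=> i /andP [le_ai lt_ia].
by rewrite -(subnKC le_ai) divnMDl // divn_small ?addn0 // ltn_subLR.
Qed.

Lemma sum_nat_neq (a j : nat) : j < a -> \sum_(0 <= b < a) (b != j) = a.-1.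
Proof.
move=> lt_ja; rewrite -big_mkcond /= sum1_count /index_iota subn0.
rewrite -[in RHS](size_iota 0 a) -(count_predC (pred1 j)).
by rewrite count_uniq_mem ?iota_uniq // mem_iota add0n lt_ja.
Qed.

Lemma card_ord_prefix (n t : nat) (P : pred nat) : t <= n ->
  #|[set i : 'I_n | (i < t) && P i]| = \sum_(0 <= i < t) P i.
Proof.
move=> le_tn; rewrite cardsE -sum1_card.
rewrite (eq_bigl (fun i : 'I_n => P i && (i < t))); last by move=> i; rewrite andbC.
rewrite (big_ord_narrow_cond le_tn) /= big_mkord big_mkcond /=.
by apply: eq_bigr => i _; case: (P i).
Qed.

Lemma card_prefix_off_block (n a m j : nat) : a * m <= n -> j < a ->
  #|[set i : 'I_n | (i < a * m) && (i %/ m != j)]| = a.-1 * m.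
Proof.
move=> le_amn lt_ja.
rewrite (@card_ord_prefix n (a * m) (fun i => i %/ m != j)) //.
rewrite (sum_nat_div_blocks (fun b => b != j)).
by rewrite -big_distrl /= sum_nat_neq.
Qed.

Lemma exists_large_fiber (T U : finType) (f : T -> U) (A : {set T}) (L : nat) :
  L * #|U| < #|A| -> exists y, L < #|[set x in A | f x == y]|.
Proof.
move=> ltA; apply/existsP; apply: contraLR ltA => /existsPn small.
rewrite -leqNgt -sum1_card (partition_big f xpredT) //= mulnC -sum_nat_const.
apply: leq_sum => y _; rewrite sum1dep_card.
by rewrite leqNgt (negbTE (small y)).
Qed.

Definition hybrid (q n k : nat) (c : 'I_k -> word q n) (blk : 'I_n -> 'I_k) :
  word q n := [ffun i => c (blk i) i].

Lemma hamming_hybrid (q n k : nat) (c : 'I_k -> word q n) (blk : 'I_n -> 'I_k)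
    (D : {set 'I_n}) (j : 'I_k) :
  (forall i, i \notin D -> forall j1 j2, c j1 i = c j2 i) ->
  hamming (hybrid c blk) (c j) <= #|[set i in D | blk i != j]|.
Proof.
move=> agree; apply: subset_leq_card; apply/fintype.subsetP => i; rewrite !inE ffunE.
have [iD|iD] := boolP (i \in D); last by rewrite (agree i iD (blk i) j) eqxx.
by apply: contra_neq => ->.
Qed.

Lemma card_list_decodable_le (q n L m k : nat) (C : {set word q n}) :
  L.+1 * m <= n -> L * m <= k ->
  (forall v : word q n, #|[set u in C | hamming v u <= k]| <= L) ->
  #|C| <= L * q ^ (n - L.+1 * m).
Proof.
set t := L.+1 * m => le_tn le_Lmk dec.
pose tail (u : word q n) : {ffun 'I_(n - t) -> 'I_q} :=
  [ffun j => u (cast_ord (subnKC le_tn) (rshift t j))].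
have card_tails : #|{ffun 'I_(n - t) -> 'I_q}| = q ^ (n - t).
  by rewrite card_ffun !card_ord.
rewrite leqNgt -card_tails; apply/negP => /(exists_large_fiber tail) [y large].
set S := [set u in C | tail u == y] in large.
pose c (j : 'I_L.+1) : word q n := enum_val (widen_ord large j).
have cS j : c j \in S by exact: enum_valP.
have c_inj : injective c by move=> j1 j2 /enum_val_inj /(congr1 val) /= /val_inj.
have agree i : i \notin [set i : 'I_n | i < t] -> forall j1 j2, c j1 i = c j2 i.
  rewrite inE -leqNgt => le_ti j1 j2.
  have lt_it : i - t < n - t by have := ltn_ord i; lia.
  have -> : i = cast_ord (subnKC le_tn) (rshift t (Ordinal lt_it)).
    by apply: val_inj; rewrite /= subnKC.
  have := cS j1; have := cS j2; rewrite !inE => /andP [_ /eqP tail2] /andP [_ /eqP tail1].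
  have := congr1 (fun g : {ffun _ -> _} => g (Ordinal lt_it)) (etrans tail1 (esym tail2)).
  by rewrite /= !ffunE.
(* [inord] sends the coordinates [i >= t] to block 0, where all [c j] agree. *)
pose v := hybrid c (fun i => inord (i %/ m)).
have close j : hamming v (c j) <= k.
  apply: leq_trans (hamming_hybrid _ j agree) _; apply: leq_trans le_Lmk.
  rewrite -(card_prefix_off_block le_tn (ltn_ord j)); apply: subset_leq_card.
  apply/fintype.subsetP => i; rewrite !inE => /andP [-> /=].
  by apply: contra_neq => ->; rewrite inord_val.
have := dec v; rewrite leqNgt => /negP; apply.
apply: (@leq_trans #|[set c j | j : 'I_L.+1]|); first by rewrite card_imset // card_ord.
apply: subset_leq_card; apply/fintype.subsetP => u /imsetP [j _ ->].
by rewrite inE close andbT; have := cS j; rewrite inE => /andP [].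
Qed.

Local Open Scope ring_scope.

Lemma powR_le_mul_powR (R : realType) (b c x y : R) : 1 < b -> 0 < c ->
  b `^ x <= c * b `^ y -> x - y <= ln c / ln b.
Proof.
move=> b_gt1 c_gt0; have b_gt0 : 0 < b by apply: lt_trans b_gt1.
have lnb_gt0 : 0 < ln b by rewrite ln_gt0.
rewrite -ler_ln ?posrE ?mulr_gt0 ?powR_gt0 // lnM ?posrE ?powR_gt0 // !ln_powR.
by rewrite ler_pdivlMr // mulrBl; lra.
Qed.

Lemma list_decodable_rate_le (R : realType) (q n L k : nat) (r eps : R)
    (C : {set word q n}) :
  (2 <= q)%N -> (1 <= L)%N -> r * n%:R = k%:R -> r * (L%:R + 1) <= L%:R ->
  list_decodable r L C -> q%:R `^ ((1 - r - eps) * n%:R) <= #|C|%:R ->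
  r * n%:R <= L%:R * eps * n%:R + L%:R * (ln L%:R / ln q%:R + L%:R + 1).
Proof.
move=> q_ge2 L_ge1 rn_k r_le dec size_C.
set m := (k %/ L)%N; set t := (L.+1 * m)%N.
have le_Lm_k : (L * m <= k)%N by rewrite mulnC leq_trunc_div.
have le_k_Lm : (k <= L * m + L)%N.
  by have := ltn_pmod k L_ge1; have := divn_eq k L; rewrite -/m; lia.
have le_tn : (t <= n)%N.
  have le_kL_Ln : (k * L.+1 <= L * n)%N.
    by rewrite -(ler_nat R) !natrM -rn_k -natr1 mulrAC ler_wpM2r.
  rewrite /t; nia.
have dec_k v : (#|[set u in C | hamming v u <= k]| <= L)%N.
  apply: leq_trans (dec v); rewrite rn_k; apply: subset_leq_card.
  by apply/fintype.subsetP => u; rewrite !inE ler_nat andbC.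
have card_C := card_list_decodable_le le_tn le_Lm_k dec_k.
have rate : (1 - r - eps) * n%:R - (n - t)%:R <= ln L%:R / ln q%:R.
  apply: powR_le_mul_powR; rewrite ?ltr1n ?ltr0n //.
  apply: (le_trans size_C).
  by rewrite powR_mulrn ?ler0n // -natrX -natrM ler_nat.
rewrite natrB // /t natrM -natr1 in rate.
have L_ge0 : (0 : R) <= L%:R by [].
have L_rate := ler_wpM2l L_ge0 rate.
have k_le_Lm : (L%:R + 1) * (k%:R - L%:R) <= (L%:R + 1) * (L%:R * m%:R) :> R.
  by rewrite ler_wpM2l ?addr_ge0 // lerBlDr -natrM -natrD ler_nat.
rewrite -rn_k in k_le_Lm; lra.
Qed.

Local Open Scope classical_set_scope.
Local Open Scope ring_scope.

Theorem proposition3p4 (R : realType) (q L : nat) (r eps : R) :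
  (2 <= q)%N -> (1 <= L)%N ->
  0 <= r -> r < L%:R / (L%:R + 1) -> 0 < eps ->
  exists delta : nat -> R,
    delta @ \oo --> 0 /\
    forall n : nat, (exists k : nat, r * n%:R = k%:R) ->
      (exists C : {set word q n},
          list_decodable r L C /\
          q%:R `^ ((1 - r - eps) * n%:R) <= #|C|%:R) ->
      r / eps + delta n <= L%:R.
Proof.
move=> q_ge2 L_ge1 _ r_lt eps_gt0.
set K : R := L%:R * (ln L%:R / ln q%:R + L%:R + 1).
exists (fun n => - ((K + r) / eps) * harmonic n); split.
  by rewrite -(mulr0 (- ((K + r) / eps))); apply: cvgMl_tmp; exact: cvg_harmonic.
move=> n [k rn_k] [C [dec size_C]].
have r_le : r * (L%:R + 1) <= L%:R by rewrite -ler_pdivlMr ?ltW.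
have key := list_decodable_rate_le q_ge2 L_ge1 rn_k r_le dec size_C.
rewrite -/K in key.
have n1_gt0 : (0 : R) < n.+1%:R by rewrite ltr0n.
rewrite /= -(ler_pM2r (mulr_gt0 eps_gt0 n1_gt0)).
have -> : (r / eps + - ((K + r) / eps) * n.+1%:R^-1) * (eps * n.+1%:R) = r * n%:R - K.
  by rewrite -natr1; field; rewrite natr1 !gt_eqF.
have Leps_ge0 : (0 : R) <= L%:R * eps by rewrite mulr_ge0 // ltW.
rewrite -natr1; lra.
Qed.
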